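(* Let $X$ be a complex Banach space, let $\mathcal{F}$ be an algebra with unit $\mathbf{1}$, and let $\Phi:\mathcal{F}\to\mathcal{C}(X)$ be a proto-calculus. Then for all $f,g\in\mathcal{F}$ and $\lambda\in\mathbb{C}$: (a) If $\lambda\neq 0$ or $\Phi(f)\in\mathcal{L}(X)$, then $\Phi(\lambda f)=\lambda\Phi(f)$. (b) If $\Phi(g)\in\mathcal{L}(X)$, then $\Phi(f)+\Phi(g)=\Phi(f+g)$ and $\Phi(f)\Phi(g)=\Phi(fg)$. (c) If $fg=\mathbf{1}$, then $\Phi(g)$ is injective and $\Phi(g)^{-1}\subseteq\Phi(f)$. If in addition $fg=gf$, then $\Phi(g)^{-1}=\Phi(f)$. (d) The set $\mathrm{bdd}(\mathcal{F},\Phi)=\{f\in\mathcal{F}: \Phi(f)\in\mathcal{L}(X)\}$ is a unital subalgebra of $\mathcal{F}$, and $\Phi:\mathrm{bdd}(\mathcal{F},\Phi)\to\mathcal{L}(X)$ is an algebra homomorphism.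
   Context: $\mathcal{L}(X)$ denotes the bounded linear operators and $\mathcal{C}(X)$ the closed (possibly unbounded) linear operators on $X$. For operators, $S\subseteq T$ means inclusion of graphs; $S+T$ has domain $\mathrm{dom}(S)\cap\mathrm{dom}(T)$, $ST$ has domain $\{x\in\mathrm{dom}(T): Tx\in\mathrm{dom}(S)\}$, and $\lambda T$ has domain $\mathrm{dom}(T)$. The algebra $\mathcal{F}$ need not be commutative. A map $\Phi:\mathcal{F}\to\mathcal{C}(X)$ is a proto-calculus if for all $f,g\in\mathcal{F}$, $\lambda\in\mathbb{C}$: (FC1) $\Phi(\mathbf{1})=I$; (FC2) $\lambda\Phi(f)\subseteq\Phi(\lambda f)$ and $\Phi(f)+\Phi(g)\subseteq\Phi(f+g)$; (FC3) $\Phi(f)\Phi(g)\subseteq\Phi(fg)$ and $\mathrm{dom}(\Phi(f)\Phi(g))=\mathrm{dom}(\Phi(g))\cap\mathrm{dom}(\Phi(fg))$. *)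

From HB Require Import structures.
From mathcomp Require Import all_boot all_order all_algebra.
From mathcomp Require Import all_classical all_reals all_analysis.
From mathcomp Require Import complex.

Set Implicit Arguments.
Unset Strict Implicit.
Unset Printing Implicit Defensive.

Import Order.TTheory GRing.Theory Num.Theory.
Import numFieldNormedType.Exports.
Local Open Scope classical_set_scope.
Local Open Scope ring_scope.

(* A (possibly unbounded, possibly non-everywhere-defined) linear operator on X
   is represented by its graph, a subset of X * X. *)

Section Operators.
Variable (C : numFieldType) (X : normedModType C).

Definition op := set (X * X).

Definition dom (T : op) : set X := [set x | exists y, T (x, y)].

Definition linear_op (T : op) : Prop :=
  [/\ T (0, 0),
      (forall x y x' y', T (x, y) -> T (x', y') -> T (x + x', y + y')),
      (forall (a : C) x y, T (x, y) -> T (a *: x, a *: y)) &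
      (forall x y y', T (x, y) -> T (x, y') -> y = y')].

Definition closed_op (T : op) : Prop := linear_op T /\ closed T.

Definition bounded_op (T : op) : Prop :=
  [/\ linear_op T, dom T = setT &
      exists M : C, forall x y, T (x, y) -> `|y| <= M * `|x|].

(* graph inclusion S ⊆ T is just [S `<=` T] *)

Definition id_op : op := [set p | p.2 = p.1].

Definition add_op (S T : op) : op :=
  [set p | exists y z, [/\ S (p.1, y), T (p.1, z) & p.2 = y + z]].

Definition mul_op (S T : op) : op :=
  [set p | exists y, T (p.1, y) /\ S (y, p.2)].

Definition scale_op (a : C) (T : op) : op :=
  [set p | exists y, T (p.1, y) /\ p.2 = a *: y].

Definition injective_op (T : op) : Prop :=
  forall x x' y, T (x, y) -> T (x', y) -> x = x'.

Definition inv_op (T : op) : op := [set p | T (p.2, p.1)].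

End Operators.

Definition proto_calculus (C : numFieldType) (X : normedModType C)
    (F : algType C) (Phi : F -> op X) : Prop :=
  (forall f, closed_op (Phi f)) /\
  Phi 1 = @id_op _ X /\
  (forall (a : C) f, scale_op a (Phi f) `<=` Phi (a *: f)) /\
  (forall f g, add_op (Phi f) (Phi g) `<=` Phi (f + g)) /\
  (forall f g, mul_op (Phi f) (Phi g) `<=` Phi (f * g)) /\
  (forall f g, dom (mul_op (Phi f) (Phi g)) = dom (Phi g) `&` dom (Phi (f * g))).

From HB Require Import structures.
From mathcomp Require Import all_boot all_order all_algebra.
From mathcomp Require Import all_classical all_reals all_analysis.
From mathcomp Require Import complex.
Import Order.TTheory GRing.Theory Num.Theory.
Import numFieldNormedType.Exports.
Local Open Scope classical_set_scope.
Local Open Scope ring_scope.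

(* The inclusions (FC2) and (FC3) become equalities as soon as their smaller
   side is everywhere defined, because their larger side is single-valued.
   For bounded [g] this covers [Phi f Phi g], defined on all of
   [dom (Phi (f g))] by the domain clause of (FC3), and [Phi f + Phi g], via
   the inclusion [Phi (f + g) + Phi (- g) ⊆ Phi f].  If [f g = 1], (FC3) at a
   point [x] of [dom (Phi g)] gives [Phi f (Phi g x) = x].  Part (d) follows
   because bounded operators are closed under sums, products and scalings. *)

Section LinearOperators.
Context {C : numFieldType} {X : normedModType C}.
Implicit Types (S T : op X) (a : C).

Lemma linear_op_fun {T x y y'} : linear_op T -> T (x, y) -> T (x, y') -> y = y'.
Proof. by case=> _ _ _; apply. Qed.

Lemma total_sub_op_eq {S T} :
  S `<=` T -> linear_op T -> dom S = setT -> S = T.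
Proof.
move=> ST linT domS; apply/seteqP; split=> // -[x z] Txz.
have [y Sxy] : dom S x by rewrite domS.
by rewrite (linear_op_fun linT Txz (ST _ Sxy)).
Qed.

Lemma bounded_op_total {T} : bounded_op T -> forall x, exists y, T (x, y).
Proof. by case=> _ domT _ x; have : dom T x by rewrite domT. Qed.

Lemma bounded_op_bound {T} : bounded_op T ->
  exists2 M : C, 0 <= M & forall x y, T (x, y) -> `|y| <= M * `|x|.
Proof.
case=> _ _ [M HM]; exists `|M| => // x y /HM Mxy.
have M0 : 0 <= M * `|x| by apply: le_trans Mxy.
by rewrite -[`|x|]normr_id -normrM ger0_norm.
Qed.

Lemma linear_add_op {S T} :
  linear_op S -> linear_op T -> linear_op (add_op S T).
Proof.
case=> S0 SD SZ Sf [T0 TD TZ Tf]; split.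
- by exists 0, 0; rewrite addr0.
- move=> x w x' w' [y [z [Sy Tz /= ->]]] [y' [z' [Sy' Tz' /= ->]]].
  by exists (y + y'), (z + z'); split; [exact: SD|exact: TD|rewrite addrACA].
- move=> a x w [y [z [Sy Tz /= ->]]].
  by exists (a *: y), (a *: z); split; [exact: SZ|exact: TZ|rewrite scalerDr].
- move=> x w w' [y [z [Sy Tz /= ->]]] [y' [z' [Sy' Tz' /= ->]]].
  by rewrite (Sf _ _ _ Sy Sy') (Tf _ _ _ Tz Tz').
Qed.

Lemma linear_mul_op {S T} :
  linear_op S -> linear_op T -> linear_op (mul_op S T).
Proof.
case=> S0 SD SZ Sf [T0 TD TZ Tf]; split.
- by exists 0.
- move=> x w x' w' [y [Ty Sw]] [y' [Ty' Sw']].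
  by exists (y + y'); split; [exact: TD|exact: SD].
- by move=> a x w [y [Ty Sw]]; exists (a *: y); split; [exact: TZ|exact: SZ].
- move=> x w w' [y [Ty Sw]] [y' [Ty' Sw']].
  by move: Sw; rewrite (Tf _ _ _ Ty Ty') => /Sf; apply.
Qed.

Lemma linear_scale_op a {T} : linear_op T -> linear_op (scale_op a T).
Proof.
case=> T0 TD TZ Tf; split.
- by exists 0; rewrite scaler0.
- move=> x w x' w' [y [Ty /= ->]] [y' [Ty' /= ->]].
  by exists (y + y'); split; [exact: TD|rewrite scalerDr].
- move=> b x w [y [Ty /= ->]].
  by exists (b *: y); split; [exact: TZ|rewrite !scalerA mulrC].
- by move=> x w w' [y [Ty /= ->]] [y' [Ty' /= ->]]; rewrite (Tf _ _ _ Ty Ty').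
Qed.

Lemma bounded_add_op {S T} :
  bounded_op S -> bounded_op T -> bounded_op (add_op S T).
Proof.
move=> bS bT; have [[linS _ _] [linT _ _]] := (bS, bT); split.
- exact: linear_add_op.
- apply/seteqP; split=> // x _.
  have [[y Sy] [z Tz]] := (bounded_op_total bS x, bounded_op_total bT x).
  by exists (y + z), y, z.
- have [[MS _ HS] [MT _ HT]] := (bounded_op_bound bS, bounded_op_bound bT).
  exists (MS + MT) => x w [y [z [Sy Tz /= ->]]].
  by rewrite mulrDl (le_trans (ler_normD y z)) // lerD ?HS ?HT.
Qed.

Lemma bounded_mul_op {S T} :
  bounded_op S -> bounded_op T -> bounded_op (mul_op S T).
Proof.
move=> bS bT; have [[linS _ _] [linT _ _]] := (bS, bT); split.
- exact: linear_mul_op.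
- apply/seteqP; split=> // x _.
  have [y Ty] := bounded_op_total bT x; have [w Sw] := bounded_op_total bS y.
  by exists w, y.
- have [[MS MS0 HS] [MT _ HT]] := (bounded_op_bound bS, bounded_op_bound bT).
  exists (MS * MT) => x w [y [Ty Sw]].
  by rewrite -mulrA (le_trans (HS _ _ Sw)) // ler_wpM2l ?HT.
Qed.

Lemma bounded_scale_op a {T} : bounded_op T -> bounded_op (scale_op a T).
Proof.
move=> bT; have [linT _ _] := bT; split.
- exact: linear_scale_op.
- apply/seteqP; split=> // x _.
  by have [y Ty] := bounded_op_total bT x; exists (a *: y), y.
- have [M _ HM] := bounded_op_bound bT.
  exists (`|a| * M) => x w [y [Ty /= ->]].
  by rewrite normrZ -mulrA ler_wpM2l ?HM.
Qed.

Lemma bounded_id_op : bounded_op (@id_op C X).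
Proof.
rewrite /id_op; split.
- by split=> /= [|x y x' y' -> ->|a x y ->|x y y' -> ->].
- by apply/seteqP; split=> // x _; exists x.
- by exists 1 => x y /= ->; rewrite mul1r.
Qed.

End LinearOperators.

Section ProtoCalculus.
Context {C : numFieldType} {X : normedModType C} {F : algType C}.
Context {Phi : F -> op X}.
Hypothesis PhiP : proto_calculus Phi.

Lemma proto_linear f : linear_op (Phi f).
Proof. by case: PhiP => closedPhi _; case: (closedPhi f). Qed.

Lemma proto1 : Phi 1 = @id_op C X.
Proof. by case: PhiP => _ []. Qed.

Lemma proto_scale_sub a f : scale_op a (Phi f) `<=` Phi (a *: f).
Proof. by case: PhiP => _ [_ []]. Qed.

Lemma proto_add_sub f g : add_op (Phi f) (Phi g) `<=` Phi (f + g).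
Proof. by case: PhiP => _ [_ [_ []]]. Qed.

Lemma proto_mul_sub f g : mul_op (Phi f) (Phi g) `<=` Phi (f * g).
Proof. by case: PhiP => _ [_ [_ [_ []]]]. Qed.

Lemma proto_dom_mul f g :
  dom (mul_op (Phi f) (Phi g)) = dom (Phi g) `&` dom (Phi (f * g)).
Proof. by case: PhiP => _ [_ [_ [_ []]]]. Qed.

Lemma proto_scale f a : (a != 0 \/ bounded_op (Phi f)) ->
  Phi (a *: f) = scale_op a (Phi f).
Proof.
case=> [a0|bf]; last first.
  apply/esym/total_sub_op_eq; [exact: proto_scale_sub|exact: proto_linear|].
  by case: (bounded_scale_op a bf).
apply/seteqP; split=> [[x z] Pz|]; last exact: proto_scale_sub.
exists (a^-1 *: z); split; last by rewrite scalerA divff ?scale1r.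
have := proto_scale_sub a^-1 (a *: f) (x, a^-1 *: z).
by rewrite scalerA mulVf ?scale1r //; apply; exists z.
Qed.

Lemma proto_add f g : bounded_op (Phi g) ->
  add_op (Phi f) (Phi g) = Phi (f + g).
Proof.
move=> bg; apply/seteqP; split=> [|[x z] Pz]; first exact: proto_add_sub.
have [w Pw] := bounded_op_total bg x.
have Pmw : Phi (- g) (x, - w).
  by rewrite -scaleN1r; apply: proto_scale_sub; exists w; rewrite scaleN1r.
have Pf : Phi f (x, z - w).
  have := proto_add_sub (f + g) (- g) (x, z - w).
  by rewrite addrK; apply; exists z, (- w).
by exists (z - w), w; rewrite subrK.
Qed.

Lemma proto_mul f g : bounded_op (Phi g) ->
  mul_op (Phi f) (Phi g) = Phi (f * g).
Proof.
move=> bg; apply/seteqP; split=> [|[x z] Pz]; first exact: proto_mul_sub.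
have [z' Pz'] : dom (mul_op (Phi f) (Phi g)) x.
  by rewrite proto_dom_mul; split; [exact: bounded_op_total|exists z].
by rewrite (linear_op_fun (proto_linear _) Pz (proto_mul_sub _ _ _ Pz')).
Qed.

Lemma proto_mul_eq1 {f g x y} : f * g = 1 -> Phi g (x, y) -> Phi f (y, x).
Proof.
move=> fg1 Pgy.
have [z [y' [Pgy' Pfz]]] : dom (mul_op (Phi f) (Phi g)) x.
  by rewrite proto_dom_mul fg1 proto1; split; [exists y|exists x].
have := proto_mul_sub f g (x, z) (ex_intro _ y' (conj Pgy' Pfz)).
rewrite fg1 proto1 /id_op /= => <-.
by rewrite (linear_op_fun (proto_linear g) Pgy Pgy').
Qed.

Lemma proto_inv_sub {f g} : f * g = 1 -> inv_op (Phi g) `<=` Phi f.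
Proof. by move=> fg1 [y x] /(proto_mul_eq1 fg1). Qed.

Lemma proto_injective {f g} : f * g = 1 -> injective_op (Phi g).
Proof.
move=> fg1 x x' y /(proto_mul_eq1 fg1) Pfx /(proto_mul_eq1 fg1) Pfx'.
exact: linear_op_fun (proto_linear f) Pfx Pfx'.
Qed.

Lemma proto_inv {f g} : f * g = 1 -> g * f = 1 -> inv_op (Phi g) = Phi f.
Proof.
move=> fg1 gf1; apply/seteqP; split; first exact: proto_inv_sub.
by move=> [y x] /(proto_mul_eq1 gf1).
Qed.

End ProtoCalculus.

Local Open Scope complex_scope.

Theorem theorem2p1 (R : realType) (X : completeNormedModType R[i])
    (F : algType R[i]) (Phi : F -> op X) :
  proto_calculus Phi ->
  (* (a) *)
  (forall (f : F) (a : R[i]), (a != 0 \/ bounded_op (Phi f)) ->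
     Phi (a *: f) = scale_op a (Phi f)) /\
  (* (b) *)
  (forall f g : F, bounded_op (Phi g) ->
     add_op (Phi f) (Phi g) = Phi (f + g) /\
     mul_op (Phi f) (Phi g) = Phi (f * g)) /\
  (* (c) *)
  (forall f g : F, f * g = 1 ->
     injective_op (Phi g) /\ inv_op (Phi g) `<=` Phi f /\
     (g * f = f * g -> inv_op (Phi g) = Phi f)) /\
  (* (d) bdd(F, Phi) is a unital subalgebra, Phi restricted to it is an
     algebra homomorphism into L(X) *)
  ((bounded_op (Phi 1) /\
    (forall f g : F, bounded_op (Phi f) -> bounded_op (Phi g) ->
       bounded_op (Phi (f + g)) /\ bounded_op (Phi (f * g))) /\
    (forall (a : R[i]) (f : F), bounded_op (Phi f) -> bounded_op (Phi (a *: f)))) /\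
   (Phi 1 = @id_op _ X /\
    forall f g : F, bounded_op (Phi f) -> bounded_op (Phi g) ->
      Phi (f + g) = add_op (Phi f) (Phi g) /\
      Phi (f * g) = mul_op (Phi f) (Phi g) /\
      (forall a : R[i], Phi (a *: f) = scale_op a (Phi f)))).
Proof.
move=> PhiP.
have scaleE f a : bounded_op (Phi f) -> Phi (a *: f) = scale_op a (Phi f).
  move=> bf; exact: proto_scale PhiP f a (or_intror bf).
split; first exact: proto_scale PhiP.
split; first by move=> f g bg; rewrite proto_add ?proto_mul.
split.
  move=> f g fg1; split; first exact (proto_injective PhiP fg1).
  split=> [|gfC]; first exact (proto_inv_sub PhiP fg1).
  exact (proto_inv PhiP fg1 (etrans gfC fg1)).
split.
  split; first by rewrite (proto1 PhiP); apply: bounded_id_op.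
  split=> [f g bf bg|a f bf].
    rewrite -proto_add // -proto_mul //.
    by split; [apply: bounded_add_op|apply: bounded_mul_op].
  by rewrite scaleE //; apply: bounded_scale_op.
split; first exact: proto1 PhiP.
move=> f g bf bg; rewrite -proto_add // -proto_mul //.
by split=> //; split=> // a; apply: scaleE.
Qed.
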